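(* Let $R^*_n$ and $c_n$ be real random variables defined on a probability space carrying data $(W_i)_{i=1}^n$, let $\delta_n>0$, $\tilde\delta_n\ge0$, $\gamma_n\in(0,1)$, and define $$\mathcal A_n=\sup_{\epsilon\ge\delta_n}\frac1\epsilon P(|R^*_n-c_n|\le\epsilon),\qquad \mathcal A_n(W)=\sup_{\epsilon\ge\delta_n}\frac1\epsilon P(|R^*_n-c_n|\le\epsilon\mid(W_i)_{i=1}^n).$$ Suppose that with probability at least $1-\gamma_n$ we have, for all $\epsilon\ge\delta_n$, $$P(|R^*_n-c_n|\le\epsilon)\le P(|R^*_n-c_n|\le\epsilon+\tilde\delta_n\mid(W_i)_{i=1}^n)+\gamma_n.$$ Then, with probability at least $1-\gamma_n$, $$\mathcal A_n\le\mathcal A_n(W)(1+\tilde\delta_n/\delta_n)+\gamma_n/\delta_n.$$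
   Context: In the paper $R^*_n$ is a bootstrap MinMax statistic and $c_n=c_n(\bar h,\alpha)$ its conditional $(1-\alpha)$-quantile given the data; the result is stated for these quantities but uses no further structure. *)

From HB Require Import structures.
From mathcomp Require Import all_boot all_order all_algebra.
From mathcomp Require Import all_classical all_reals all_analysis.
Set Implicit Arguments. Unset Strict Implicit. Unset Printing Implicit Defensive.
Import Order.TTheory GRing.Theory Num.Theory.
Local Open Scope classical_set_scope.
Local Open Scope ring_scope.

Definition sigmaW d (T : measurableType d) d' (T' : measurableType d') (n : nat)
  (W : 'I_n -> T -> T') : set (set T) :=
  <<s [set A | exists i, exists2 B, measurable B & A = W i @^-1` B] >>.

Definition is_cond_prob d (T : measurableType d) (R : realType)
  (P : probability T R) (G : set (set T)) (S : set T) (g : T -> R) : Prop :=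
  [/\ (forall B : set R, measurable B -> G (g @^-1` B)),
      P.-integrable setT (EFin \o g)
    & forall A, G A -> (\int[P]_(x in A) (g x)%:E = P (S `&` A))%E].

Definition near_event d (T : measurableType d) (R : realType)
  (Rs c : T -> R) (e : R) : set T := [set w | `|Rs w - c w| <= e].

Definition A_n d (T : measurableType d) (R : realType) (P : probability T R)
  (Rs c : T -> R) (delta : R) : R :=
  sup [set fine (P (near_event Rs c e)) / e | e in [set e | delta <= e]].

(* A_n(W)(w) = sup_{eps >= delta} (1/eps) P(|R* - c| <= eps | W)(w),
   pc w e being the chosen version of P(|R* - c| <= e | W) at w *)
Definition A_nW d (T : measurableType d) (R : realType)
  (pc : T -> R -> R) (delta : R) (w : T) : R :=
  sup [set pc w e / e | e in [set e | delta <= e]].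

From HB Require Import structures.
From mathcomp Require Import all_boot all_order all_algebra.
From mathcomp Require Import all_classical all_reals all_analysis.
From mathcomp Require Import ring.
Import Order.TTheory GRing.Theory Num.Theory.
Local Open Scope classical_set_scope.
Local Open Scope ring_scope.

(* The statement is deterministic once the data are fixed: on the event E of
   the hypothesis, shift each [eps] by [deltat] inside the conditional
   probability and use [eps / (eps + deltat) >= 1 / (1 + deltat / delta)]
   for [eps >= delta]; the additive [gamma] contributes at most
   [gamma / delta]. *)

Section SupRatio.
Set Implicit Arguments.
Unset Strict Implicit.
Variable R : realType.
Implicit Types (f p q : R -> R) (delta e dt gamma x : R).

Definition sup_ratio f delta : R :=
  sup [set f e / e | e in [set e | delta <= e]].

Lemma sup_ratio_ubound f delta : 0 < delta -> (forall e, f e <= 1) ->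
  has_ubound [set f e / e | e in [set e | delta <= e]].
Proof.
move=> delta_gt0 f_le1; exists delta^-1 => _ [e /= delta_le_e <-].
have e_gt0 : 0 < e by apply: lt_le_trans delta_le_e.
rewrite ler_pdivrMr // (le_trans (f_le1 e)) //.
by rewrite mulrC ler_pdivlMr // mul1r.
Qed.

Lemma le_sup_ratio f delta e : 0 < delta -> (forall e, f e <= 1) ->
  delta <= e -> f e / e <= sup_ratio f delta.
Proof.
by move=> delta_gt0 f_le1 delta_le_e; apply: ub_le_sup;
  [exact: sup_ratio_ubound | exists e].
Qed.

Lemma ratio_shift_le delta e dt x : 0 < delta -> delta <= e -> 0 <= dt ->
  0 <= x -> x / e <= x / (e + dt) * (1 + dt / delta).
Proof.
move=> delta_gt0 delta_le_e dt_ge0 x_ge0.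
have e_gt0 : 0 < e by apply: lt_le_trans delta_le_e.
have edt_gt0 : 0 < e + dt by apply: ltr_wpDr.
have -> : x / e = x / (e + dt) * (1 + dt / e) by field; rewrite ?gt_eqF.
rewrite ler_wpM2l ?divr_ge0 ?(ltW edt_gt0) // lerD2l ler_wpM2l //.
by rewrite lef_pV2 ?posrE.
Qed.

Lemma sup_ratio_shift_le p q delta dt gamma :
  0 < delta -> 0 <= dt -> 0 <= gamma -> (forall e, 0 <= q e <= 1) ->
  (forall e, delta <= e -> p e <= q (e + dt) + gamma) ->
  sup_ratio p delta <= sup_ratio q delta * (1 + dt / delta) + gamma / delta.
Proof.
move=> delta_gt0 dt_ge0 gamma_ge0 q01 p_le_q.
have q_le1 e : q e <= 1 by case/andP: (q01 e).
have q_ge0 e : 0 <= q e by case/andP: (q01 e).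
apply: ge_sup; first by exists (p delta / delta), delta => /=.
move=> _ [e /= delta_le_e <-].
have e_gt0 : 0 < e by apply: lt_le_trans delta_le_e.
have delta_le_edt : delta <= e + dt by rewrite (le_trans delta_le_e) ?lerDl.
apply: le_trans (_ : (q (e + dt) + gamma) / e <= _).
  by rewrite ler_pM2r ?invr_gt0 ?p_le_q.
rewrite mulrDl lerD //; last by rewrite ler_wpM2l // lef_pV2 ?posrE.
apply: le_trans (ratio_shift_le delta_gt0 delta_le_e dt_ge0 (q_ge0 _)) _.
rewrite ler_wpM2r ?le_sup_ratio //.
by rewrite addr_ge0 // divr_ge0 // ltW.
Qed.

End SupRatio.

Theorem theorem5p3 (d : measure_display) (T : measurableType d) (R : realType)
  (P : probability T R) (d' : measure_display) (T' : measurableType d')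
  (n : nat) (W : 'I_n -> T -> T') (HW : forall i, measurable_fun setT (W i))
  (Rs c : T -> R) (HRs : measurable_fun setT Rs) (Hc : measurable_fun setT c)
  (pc : T -> R -> R)
  (Hpc : forall e : R, is_cond_prob P (sigmaW W) (near_event Rs c e) (fun w => pc w e))
  (Hpc01 : forall w e, 0 <= pc w e <= 1)
  (delta deltat gamma : R) (hdelta : 0 < delta) (hdeltat : 0 <= deltat)
  (hgamma : 0 < gamma < 1) :
  (exists E : set T, [/\ measurable E, ((1 - gamma)%:E <= P E)%E &
     forall w, E w -> forall e, delta <= e ->
       fine (P (near_event Rs c e)) <= pc w (e + deltat) + gamma]) ->
  exists E : set T, [/\ measurable E, ((1 - gamma)%:E <= P E)%E &
     forall w, E w ->
       A_n P Rs c delta <= A_nW pc delta w * (1 + deltat / delta) + gamma / delta].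
Proof.
move=> [E [mE PE E_shift]]; exists E; split => // w Ew.
have gamma_ge0 : 0 <= gamma by case/andP: hgamma => /ltW.
exact: (sup_ratio_shift_le (p := fun e => fine (P (near_event Rs c e)))
  hdelta hdeltat gamma_ge0 (Hpc01 w) (E_shift w Ew)).
Qed.
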